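(* Let $X$ be a finite-dimensional normed space and let $(A_n)_{n\in\mathbb N}$ be a sequence of unbounded connected subsets of $X$. Then either $\bigcap_{n\in\mathbb N}A_n=\emptyset$, or for all but finitely many $k\in\mathbb N$ and every $\varepsilon>0$ there is an infinite subset $N_k\subset\mathbb N$ such that $T_k\cap\bigcap_{n\in N_k}A_n^\varepsilon\neq\emptyset$.
   Context: For a set $A\subset X$ and $\varepsilon>0$, $A^\varepsilon=\{x\in X:\mathrm{dist}(x,A)\le\varepsilon\}$. For $k\in\mathbb N$, $T_k=\{x\in X: k\le\|x\|\le k+1\}$. *)

From HB Require Import structures.
From mathcomp Require Import all_boot all_order all_algebra.
From mathcomp Require Import all_classical all_reals all_analysis.
Set Implicit Arguments. Unset Strict Implicit. Unset Printing Implicit Defensive.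
Import Order.TTheory GRing.Theory Num.Theory.
Import numFieldNormedType.Exports.
Local Open Scope classical_set_scope.
Local Open Scope ring_scope.

Definition findim (R : realType) (X : normedModType R) : Prop :=
  exists (n : nat) (b : 'I_n -> X),
    forall x : X, exists c : 'I_n -> R, x = \sum_(i < n) c i *: b i.

Definition dist_set (R : realType) (X : normedModType R) (x : X) (A : set X) : R :=
  inf [set `|x - a| | a in A].

Definition enlarge (R : realType) (X : normedModType R) (A : set X) (e : R) : set X :=
  [set x | dist_set x A <= e].

Definition shell (R : realType) (X : normedModType R) (k : nat) : set X :=
  [set x | (k%:R <= `|x|) && (`|x| <= k.+1%:R)].

From HB Require Import structures.
From mathcomp Require Import all_boot all_order all_algebra.
From mathcomp Require Import all_classical all_reals all_analysis.
Set Implicit Arguments.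
Unset Printing Implicit Defensive.
Import Order.TTheory GRing.Theory Num.Theory.
Import numFieldNormedType.Exports.
Local Open Scope classical_set_scope.
Local Open Scope ring_scope.

(* Pick x0 in the intersection and k > |x0|. Each A_n is connected, meets the
   ball of radius k at x0 and leaves the ball of radius k+1, so it meets the
   shell T_k at some point a_n. In finite dimension T_k lies in a compact set,
   so the a_n cluster at some p: infinitely many of them lie within e/2 of p,
   and any one of those is within e of all the others, hence lies in every
   A_n^e along that infinite set of indices. *)

Lemma normr_rV_coord_le (R : realType) n (c : 'rV[R]_n) i :
  `|c ord0 i| <= `|c|.
Proof.
have /mapP[ij _ ->] : `|c ord0 i| \in [seq `|c x.1 x.2| | x : 'I_1 * 'I_n].
  by apply/mapP; exists (ord0, i) => //=; rewrite mem_enum.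
by rewrite [leRHS]/Num.norm /= mx_normrE; apply/bigmax_geP; right; exists ij.
Qed.

Lemma compact_norm_le_rV (R : realType) n (M : R) :
  compact [set c : 'rV[R]_n | `|c| <= M].
Proof.
apply: bounded_closed_compact.
  rewrite /= /bounded_near; near=> N => c /= hc.
  apply: le_trans hc _; near: N; apply: nbhs_pinfty_ge; exact: num_real.
exact: (continuous_closedP _).1 (@norm_continuous R 'rV[R]_n) _ (@closed_le R M).
Unshelve. all: by end_near.
Qed.

Lemma unbounded_nat_infinite (N : set nat) :
  (forall J, exists2 j, (J <= j)%N & N j) -> infinite_set N.
Proof.
move=> unbN /finite_seqP[s defN].
have [j ltj Nj] := unbN (\max_(i <- s) i).+1.
rewrite defN /= in Nj.
by move: ltj; rewrite ltnNge (@leq_bigmax_seq _ s xpredT id j Nj isT).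
Qed.

Section FiniteDimensional.
Context {R : realType} {X : normedModType R}.

Definition spanning n (b : 'I_n -> X) : Prop :=
  forall x : X, exists c : 'I_n -> R, x = \sum_(i < n) c i *: b i.

Definition free_family n (b : 'I_n -> X) : Prop :=
  forall c : 'I_n -> R, \sum_(i < n) c i *: b i = 0 -> forall i, c i = 0.

(* A nontrivial relation lets one vector be dropped without losing the span. *)
Lemma spanning_free_subfamily n (b : 'I_n -> X) : spanning b ->
  exists m (b' : 'I_m -> X), spanning b' /\ free_family b'.
Proof.
elim: n b => [|n IHn] b spanb.
  by exists 0%N, b; split => // c _ [].
have [freeb|not_free] := pselect (free_family b); first by exists n.+1, b.
have [c [rel_c [j cj0]]] : exists c : 'I_n.+1 -> R,
    \sum_i c i *: b i = 0 /\ exists j, c j != 0.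
  apply: contra_notP not_free => H c rel_c i.
  have [//|ci0] := eqVneq (c i) 0.
  by exfalso; apply: H; exists c; split => //; exists i.
apply: (IHn (fun i => b (lift j i))) => x.
have [d ->] := spanb x.
exists (fun i => d (lift j i) - d j * (c j)^-1 * c (lift j i)).
have bj : \sum_(i < n) c (lift j i) *: b (lift j i) = - (c j *: b j).
  move: rel_c; rewrite (bigD1_ord j) //= => /eqP; rewrite addr_eq0 => /eqP ->.
  by rewrite opprK.
rewrite (bigD1_ord j) //=.
under [RHS]eq_bigr do rewrite scalerBl -scalerA.
rewrite sumrB -scaler_sumr bj scalerN opprK scalerA -mulrA mulVf // mulr1.
by rewrite addrC.
Qed.

Lemma findim_basis : findim X ->
  exists m (b : 'I_m -> X), spanning b /\ free_family b.
Proof. by case=> n [b spanb]; exact: spanning_free_subfamily spanb. Qed.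

Definition lincomb n (b : 'I_n -> X) (c : 'rV[R]_n) : X :=
  \sum_(i < n) c ord0 i *: b i.

Lemma lincombZ n (b : 'I_n -> X) k c : lincomb b (k *: c) = k *: lincomb b c.
Proof.
by rewrite /lincomb scaler_sumr; apply: eq_bigr => i _; rewrite mxE scalerA.
Qed.

Lemma lincombB n (b : 'I_n -> X) c c' :
  lincomb b (c - c') = lincomb b c - lincomb b c'.
Proof.
by rewrite /lincomb -sumrB; apply: eq_bigr => i _; rewrite !mxE scalerBl.
Qed.

Lemma norm_lincomb_le n (b : 'I_n -> X) c :
  `|lincomb b c| <= `|c| * \sum_(i < n) `|b i|.
Proof.
rewrite /lincomb mulr_sumr; apply: le_trans (ler_norm_sum _ _ _) _.
apply: ler_sum => i _; rewrite normrZ ler_wpM2r //.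
exact: normr_rV_coord_le.
Qed.

Lemma continuous_lincomb n (b : 'I_n -> X) : continuous (lincomb b).
Proof.
move=> c; have nbhs_c := nbhs_filter c.
have near_c := (@cvgrPdist_le _ _ _ _ nbhs_c id c).1 (@cvg_id _ (nbhs c)).
apply/(@cvgrPdist_le _ _ _ _ nbhs_c) => e e0.
set L := \sum_(i < n) `|b i|.
have L1_gt0 : 0 < L + 1 by rewrite ltr_wpDl // sumr_ge0.
near=> y; rewrite -lincombB; apply: le_trans (norm_lincomb_le b (c - y)) _.
have : `|c - y| <= e / (L + 1).
  by near: y; apply: near_c; rewrite divr_gt0.
rewrite ler_pdivlMr // => cy_le; apply: le_trans cy_le.
by rewrite ler_wpM2l // lerDl.
Unshelve. all: by end_near.
Qed.

(* Compactness of the unit sphere of 'rV_n turns the pointwise positivity of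
   |lincomb b c| into a uniform lower bound. *)
Lemma free_lincomb_norm_ge n (b : 'I_n -> X) : free_family b ->
  exists2 m, 0 < m & forall c, m * `|c| <= `|lincomb b c|.
Proof.
move=> freeb; set S := [set c : 'rV[R]_n | `|c| = 1].
have normalize_in_S c : c != 0 -> S (`|c|^-1 *: c).
  by move=> c0; rewrite /S /= mx_normZ normfV normr_id mulVf // normr_eq0.
have [S0|S0] := pselect (S !=set0); last first.
  exists 1 => // c; have [->|c0] := eqVneq c 0; first by rewrite normr0 mulr0.
  by exfalso; apply: S0; exists (`|c|^-1 *: c); exact: normalize_in_S.
have compactS : compact S.
  apply: (subclosed_compact _ (compact_norm_le_rV 1)); last by move=> c /= ->.
  exact: (continuous_closedP _).1 (@norm_continuous R 'rV[R]_n) _ (@closed_eq R 1).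
have contS : {within S, continuous (fun c => `|lincomb b c|)}.
  apply: continuous_subspaceT => c.
  by apply: continuous_comp; [exact: continuous_lincomb | exact: norm_continuous].
have [c0 /set_mem Sc0 c0_min] := EVT_min_rV S0 compactS contS.
exists `|lincomb b c0|.
  rewrite normr_gt0; apply: contra_eqN Sc0 => /eqP lincomb0.
  have -> : c0 = 0.
    apply/matrixP => i j; rewrite (ord1 i) mxE.
    exact: freeb (fun k => c0 ord0 k) lincomb0 j.
  by rewrite normr0 eq_sym oner_eq0.
move=> c; have [->|c0n] := eqVneq c 0; first by rewrite normr0 mulr0.
have := c0_min _ (mem_set (normalize_in_S _ c0n)).
rewrite lincombZ normrZ normfV normr_id.
by rewrite ler_pdivlMl ?normr_gt0 // mulrC.
Qed.

Lemma findim_closed_ball_sub_compact : findim X -> forall M : R,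
  exists2 C : set X, compact C & [set x | `|x| <= M] `<=` C.
Proof.
move=> /findim_basis[m [b [spanb freeb]]] M.
have [mu mu_gt0 mu_le] := free_lincomb_norm_ge freeb.
exists (lincomb b @` [set c | `|c| <= M / mu]).
  apply: continuous_compact (compact_norm_le_rV _).
  exact/continuous_subspaceT/continuous_lincomb.
move=> x /= xM; have [c defx] := spanb x.
have lincomb_row : lincomb b (\row_i c i) = x.
  by rewrite defx; apply: eq_bigr => i _; rewrite mxE.
exists (\row_i c i) => //=.
by rewrite ler_pdivlMr // mulrC; apply: le_trans (mu_le _) _; rewrite lincomb_row.
Qed.

End FiniteDimensional.

Section NormedSpace.
Context {R : realType} {X : normedModType R}.

Lemma dist_set_le {x : X} {A : set X} {a : X} : A a -> dist_set x A <= `|x - a|.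
Proof.
move=> Aa; apply: ge_inf; last by exists a.
by exists 0 => _ [b _ <-].
Qed.

Lemma compact_cluster_indices (C : set X) (u : nat -> X) (d : R) :
  compact C -> (forall j, C (u j)) -> 0 < d ->
  exists p, infinite_set [set j | `|p - u j| < d].
Proof.
move=> compactC Cu d_gt0.
have evC : (u @ \oo) C by exists 0%N => // j _; exact: Cu.
have [p [_ clp]] := compactC _ (fmap_proper_filter u eventually_filter) evC.
exists p; apply: unbounded_nat_infinite => J.
have evJ : (u @ \oo) (u @` [set j | (J <= j)%N]) by exists J => // j; exists j.
have [_ [[j Jj <-]]] := clp _ _ evJ (nbhsx_ballx p d d_gt0).
by rewrite -ball_normE; exists j.
Qed.

Lemma shell_norm_le k (x : X) : shell k x -> `|x| <= k.+1%:R.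
Proof. by case/andP. Qed.

(* If A missed the shell T_k, the open ball {|y| < k} and the closed ball
   {|y| <= k} would cut out the same nonempty clopen part of A, which would
   then be all of A and contradict unboundedness. *)
Lemma connected_unbounded_meets_shell (A : set X) (x0 : X) (k : nat) :
  connected A -> ~ bounded_set A -> A x0 -> `|x0| <= k%:R ->
  exists2 y, A y & shell k y.
Proof.
move=> connA unbA Ax0 x0k; apply: contrapT => missT.
have normA_ne y : A y -> `|y| != k%:R.
  move=> Ay; apply/eqP => yk; apply: missT; exists y => //.
  by rewrite /shell /= yk lexx ler_nat leqnSn.
have [z Az kz] : exists2 z, A z & k.+1%:R < `|z|.
  apply: contrapT => bndA; apply: unbA.
  rewrite /= /bounded_near; near=> N => y Ay /=.
  have : `|y| <= k.+1%:R by rewrite leNgt; apply/negP => ?; apply: bndA; exists y.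
  move/le_trans; apply; near: N; apply: nbhs_pinfty_ge; exact: num_real.
have inner_eq_A : A `&` [set y | `|y| < k%:R] = A.
  apply: connA.
  - by exists x0; split => //=; rewrite lt_neqAle x0k normA_ne.
  - exists [set y : X | `|y| < k%:R] => //.
    exact: (continuousP _).1 (@norm_continuous R X) _ (@open_lt R k%:R).
  - exists [set y : X | `|y| <= k%:R].
      exact: (continuous_closedP _).1 (@norm_continuous R X) _ (@closed_le R k%:R).
    apply/seteqP; split => y [Ay /= yk]; split => //=; first exact: ltW.
    by rewrite lt_neqAle yk normA_ne.
have [_ /= zk] : (A `&` [set y | `|y| < k%:R]) z by rewrite inner_eq_A.
move: kz; rewrite ltNge => /negP; apply.
by apply: le_trans (ltW zk) _; rewrite ler_nat leqnSn.
Unshelve. all: by end_near.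
Qed.

End NormedSpace.

Theorem lemma2 (R : realType) (X : normedModType R) (hX : findim X)
  (A : nat -> set X)
  (hA : forall n, ~ bounded_set (A n) /\ connected (A n)) :
  \bigcap_n A n = set0 \/
  exists K : nat, forall k : nat, (K <= k)%N ->
    forall e : R, 0 < e ->
      exists N : set nat, infinite_set N /\
        (@shell R X k `&` \bigcap_(n in N) enlarge (A n) e) !=set0.
Proof.
have [|/set0P[x0 Ax0]] := eqVneq (\bigcap_n A n) set0; [by left | right].
exists (Num.truncn `|x0|).+1 => k Kk e e_gt0.
have x0k : `|x0| <= k%:R.
  by apply: le_trans (ltW (truncnS_gt _)) _; rewrite ler_nat.
have /choice[a Aa] : forall j, exists y, A j y /\ shell k y.
  move=> j; have [unbA connA] := hA j.
  by have [y] := connected_unbounded_meets_shell x0 k connA unbA (Ax0 j I) x0k; exists y.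
have [C compactC ballC] := findim_closed_ball_sub_compact hX k.+1%:R.
have e2_gt0 : 0 < e / 2 by rewrite divr_gt0.
have [p infN] := compact_cluster_indices a (e / 2) compactC
  (fun j => ballC _ (shell_norm_le (Aa j).2)) e2_gt0.
have [j0 Nj0] := infinite_setN0 infN.
exists [set j | `|p - a j| < e / 2]; split => //.
exists (a j0); split; first exact: (Aa j0).2.
move=> j Nj; apply: le_trans (dist_set_le (Aa j).1) _.
apply: le_trans (ler_distD p _ _) _.
by rewrite distrC [e]splitr lerD // ltW.
Qed.
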